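(* Let $\delta:\,]0,+\infty[\to\mathbb R$ be nonnegative, bounded and continuously differentiable with $\lim_{r\downarrow0}\sqrt r\,\delta'(r)=0$ (so that $u\mapsto\delta(u^2)$ extends to a continuously differentiable function on $\mathbb R$). Consider the system $$u''+\delta(u^2)u^2u'=\frac{Eu}{2},\qquad E'=-4\delta(u^2)(u')^2,$$ and the invariant manifold $\mathcal M=\{(u,u',E)\in\mathbb R\times\mathbb R\times\mathbb R:\ 2(u')^2-Eu^2=1\}$. Let $(u,E):\,]A,0]\to\mathbb R^2$ be a solution of this system lying on $\mathcal M$ and maximal to the left. If $A>-\infty$, then there exists $s_1\in\,]A,0]$ such that $u'(s)u(s)<0$ for all $s\in\,]A,s_1]$.
   Context: Primes denote derivatives with respect to the independent variable $s$. Maximal to the left means the solution admits no extension to an interval $]\hat A,0]$ with $\hat A<A$. *)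

From Stdlib Require Import Reals Lra ClassicalEpsilon.
From Coquelicot Require Import Coquelicot.
Open Scope R_scope.

(* The limit of delta at 0+ (it exists under the hypotheses of the lemma). *)
Definition delta0 (delta : R -> R) : R :=
  epsilon (inhabits 0) (fun l => filterlim delta (at_right 0) (locally l)).

(* Extension of delta to [0, +oo[ by its right limit at 0, so that
   u |-> delta_ext delta (u^2) is the continuous extension of u |-> delta(u^2). *)
Definition delta_ext (delta : R -> R) (r : R) : R :=
  if Rlt_dec 0 r then delta r else delta0 delta.

(* f' is the derivative of f on the set D, relative to D
   (one-sided at endpoints of D belonging to D). *)
Definition has_deriv_on (D : R -> Prop) (f f' : R -> R) : Prop :=
  forall s, D s ->
    filterlim (fun t => (f t - f s) / (t - s))
      (within (fun t => D t /\ t <> s) (locally s)) (locally (f' s)).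

Definition left_int (a : Rbar) (s : R) : Prop := Rbar_lt a (Finite s) /\ s <= 0.

Definition is_solution (delta : R -> R) (a : Rbar) (u du E : R -> R) : Prop :=
  exists ddu dE : R -> R,
    has_deriv_on (left_int a) u du /\
    has_deriv_on (left_int a) du ddu /\
    has_deriv_on (left_int a) E dE /\
    forall s, left_int a s ->
      ddu s + delta_ext delta (u s ^ 2) * u s ^ 2 * du s = E s * u s / 2 /\
      dE s = - 4 * delta_ext delta (u s ^ 2) * du s ^ 2.

Definition on_M (a : Rbar) (u du E : R -> R) : Prop :=
  forall s, left_int a s -> 2 * du s ^ 2 - E s * u s ^ 2 = 1.

Definition maximal_left (delta : R -> R) (a : Rbar) (u du E : R -> R) : Prop :=
  ~ exists (a' : Rbar) (v dv F : R -> R),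
      Rbar_lt a' a /\ is_solution delta a' v dv F /\
      forall s, left_int a s -> v s = u s /\ F s = E s.

(* Near a finite left end A the solution must be unbounded: otherwise its components are
   Lipschitz there and converge as s -> A, and Picard iteration from the limit (for the system
   with clamped, hence globally Lipschitz, right-hand side) continues it beyond A, against
   maximality.
   Along the flow E' = -4 delta(u^2) u'^2 <= 0. If E < 0 on some ]A, c], then on M |u'| <= 1
   and E stays in [E(c), 0[, a bounded solution; so E >= 0 on some ]A, s0]. If moreover
   u u' >= 0 there, then u^2 <= u(s0)^2, and Gronwall's lemma applied to
   -E' <= 2 M (1 + E u^2), M a bound for delta, bounds E: again a bounded solution. So
   u u' < 0 at some t0 <= s0.
   Finally, on M, at a zero of w = u u' one has w' = 1/2 + E u^2 > 0, so w cannot vanish on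
   ]A, t0]. *)

From Stdlib Require Import Reals Lra Lia ClassicalEpsilon Classical.
From Coquelicot Require Import Coquelicot.
Open Scope R_scope.

(** * Real analysis *)

Lemma ball_Rabs (x e y : R) : ball x e y <-> Rabs (y - x) < e.
Proof. reflexivity. Qed.

Lemma Rle_of_le_plus_linear (a b C r : R) : 0 < r ->
  (forall y, 0 < y < r -> a <= b + C * y) -> a <= b.
Proof.
  intros Hr H. apply Rle_plus_epsilon. intros eps Heps.
  assert (HC := Rabs_pos C).
  set (y := Rmin (r / 2) (eps / (Rabs C + 1))).
  assert (Hy : 0 < y) by (apply Rmin_pos; [lra | apply Rdiv_lt_0_compat; lra]).
  assert (Hyr : y <= r / 2) by apply Rmin_l.
  assert (Hye : (Rabs C + 1) * y <= eps).
  { apply Rle_trans with ((Rabs C + 1) * (eps / (Rabs C + 1))).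
    - apply Rmult_le_compat_l; [lra | apply Rmin_r].
    - right; field; lra. }
  assert (C * y <= Rabs C * y) by (apply Rmult_le_compat_r; [lra | apply Rle_abs]).
  specialize (H y ltac:(lra)). nra.
Qed.

Lemma continuous_eps (f : R -> R) (x : R) : continuous f x ->
  forall e, 0 < e -> exists d, 0 < d /\ forall y, Rabs (y - x) < d -> Rabs (f y - f x) < e.
Proof.
  intros H e He. apply filterlim_locally with (eps := mkposreal e He) in H.
  destruct H as [d Hd]. exists d. split; [apply cond_pos|].
  intros y Hy. apply (Hd y Hy).
Qed.

Lemma lipschitz_continuous (f : R -> R) (C x : R) :
  (forall y z, Rabs (f y - f z) <= C * Rabs (y - z)) -> continuous f x.
Proof.
  intros H. apply filterlim_locally. intros eps.
  assert (HC := Rabs_pos C).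
  assert (Hp : 0 < eps / (Rabs C + 1)) by (apply Rdiv_lt_0_compat; [apply cond_pos | lra]).
  exists (mkposreal _ Hp). intros y Hy. apply ball_Rabs in Hy. apply ball_Rabs. simpl in Hy.
  assert (Hyx : (Rabs C + 1) * Rabs (y - x) < eps).
  { apply Rmult_lt_compat_l with (r := Rabs C + 1) in Hy; [|lra].
    replace ((Rabs C + 1) * (eps / (Rabs C + 1))) with (pos eps) in Hy by (field; lra). exact Hy. }
  specialize (H y x). assert (C * Rabs (y - x) <= Rabs C * Rabs (y - x))
    by (apply Rmult_le_compat_r; [apply Rabs_pos | apply Rle_abs]).
  pose proof (Rabs_pos (y - x)). nra.
Qed.

Lemma is_derive_eps (f : R -> R) (s l : R) : is_derive f s l ->
  forall eps, 0 < eps -> exists d, 0 < d /\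
    forall t, t <> s -> Rabs (t - s) < d -> Rabs ((f t - f s) / (t - s) - l) < eps.
Proof.
  intros H eps He. apply is_derive_Reals in H. destruct (H eps He) as [d Hd].
  exists d. split; [apply cond_pos|]. intros t ts Ht.
  specialize (Hd (t - s)). replace (s + (t - s)) with t in Hd by ring.
  apply Hd; [lra | exact Ht].
Qed.

Lemma is_derive_mult_R (f g : R -> R) (x df dg : R) : is_derive f x df -> is_derive g x dg ->
  is_derive (fun s => f s * g s) x (df * g x + f x * dg).
Proof.
  intros Hf Hg.
  replace (df * g x + f x * dg) with (plus (mult df (g x)) (mult (f x) dg))
    by (unfold plus, mult; simpl; ring).
  apply (is_derive_mult f g x df dg Hf Hg). intros; apply Rmult_comm.
Qed.

Lemma is_derive_affine (f : R -> R) (a C x d : R) : is_derive f x d ->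
  is_derive (fun s => a + C * f s) x (C * d).
Proof.
  intros H.
  pose proof (is_derive_plus _ _ x _ _ (is_derive_const a x) (is_derive_scal f x C d H)) as H2.
  rewrite (plus_zero_l (G := R_AbelianGroup)) in H2. exact H2.
Qed.

Lemma exp_le_compat (x y : R) : x <= y -> exp x <= exp y.
Proof. intros [Hxy | ->]; [left; apply exp_increasing, Hxy | right; reflexivity]. Qed.

Lemma MVT_closed (f f' : R -> R) (x y : R) : x <= y ->
  (forall z, x <= z <= y -> is_derive f z (f' z)) ->
  exists c, x <= c <= y /\ f y - f x = f' c * (y - x).
Proof.
  intros Hxy H. destruct (MVT_gen f x y f') as [c [Hc E]];
    rewrite ?Rmin_left, ?Rmax_right in * by lra.
  - intros z Hz. apply H. lra.
  - intros z Hz. apply continuity_pt_filterlim.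
    apply (ex_derive_continuous (K := R_AbsRing) (V := R_NormedModule)).
    eexists. apply H; lra.
  - exists c; auto.
Qed.

Lemma le_of_deriv_nonneg (f f' : R -> R) (x y : R) : x <= y ->
  (forall z, x <= z <= y -> is_derive f z (f' z) /\ 0 <= f' z) -> f x <= f y.
Proof.
  intros Hxy H. destruct (MVT_closed f f' x y Hxy) as [c [Hc E]].
  - intros z Hz; apply H, Hz.
  - assert (0 <= f' c) by (apply H, Hc). nra.
Qed.

Lemma lipschitz_of_deriv_bound (f f' : R -> R) (a b K : R) :
  (forall z, a < z <= b -> is_derive f z (f' z) /\ Rabs (f' z) <= K) ->
  forall x y, a < x <= b -> a < y <= b -> Rabs (f x - f y) <= K * Rabs (x - y).
Proof.
  intros H.
  assert (Hle : forall x y, a < x <= y -> y <= b -> Rabs (f y - f x) <= K * (y - x)).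
  { intros x y Hx Hy. destruct (MVT_closed f f' x y) as [c [Hc ->]]; [lra | |].
    - intros z Hz; apply H; lra.
    - rewrite Rabs_mult, (Rabs_right (y - x)) by lra.
      apply Rmult_le_compat_r; [lra | apply H; lra]. }
  intros x y Hx Hy. destruct (Rle_or_lt x y).
  - rewrite Rabs_minus_sym, (Rabs_minus_sym x), (Rabs_right (y - x)) by lra. apply Hle; lra.
  - rewrite (Rabs_right (x - y)) by lra. apply Hle; lra.
Qed.

Lemma lipschitz_limit_at_right (g : R -> R) (a c K : R) : a < c -> 0 <= K ->
  (forall x y, a < x <= c -> a < y <= c -> Rabs (g x - g y) <= K * Rabs (x - y)) ->
  exists l, filterlim g (at_right a) (locally l) /\
    forall x, a < x <= c -> Rabs (g x - l) <= K * (x - a).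
Proof.
  intros Hac HK Hg.
  assert (Hl : exists l, filterlim g (at_right a) (locally l)).
  { apply (filterlim_locally_cauchy (F := at_right a) (U := R_CompleteSpace) g). intros eps.
    set (d := Rmin (c - a) (eps / (K + 1))).
    assert (Hd : 0 < d) by (apply Rmin_pos; [lra | apply Rdiv_lt_0_compat; [apply cond_pos | lra]]).
    assert (Hdc : d <= c - a) by apply Rmin_l.
    assert (Hde : (K + 1) * d <= eps).
    { apply Rle_trans with ((K + 1) * (eps / (K + 1))).
      - apply Rmult_le_compat_l; [lra | apply Rmin_r].
      - right; field; lra. }
    exists (fun x => a < x < a + d). split.
    - exists (mkposreal d Hd). intros y Hy Hay.
      assert (Hya : Rabs (y - a) < d) by exact Hy. apply Rabs_def2 in Hya. lra.
    - intros x y Hx Hy. apply ball_Rabs.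
      assert (Hxy : Rabs (y - x) < d) by (apply Rabs_def1; lra).
      eapply Rle_lt_trans; [apply Hg; lra|].
      pose proof (Rabs_pos (y - x)). pose proof (cond_pos eps). nra. }
  destruct Hl as [l Hl]. exists l. split; [exact Hl|].
  intros x Hx. apply Rle_plus_epsilon. intros h Hh.
  apply filterlim_locally with (eps := mkposreal h Hh) in Hl. destruct Hl as [d Hd].
  set (z := a + Rmin d (x - a) / 2).
  assert (Hm : 0 < Rmin d (x - a)) by (apply Rmin_pos; [apply cond_pos | lra]).
  pose proof (Rmin_l d (x - a)). pose proof (Rmin_r d (x - a)).
  assert (Hz : Rabs (g z - l) < h).
  { apply (Hd z); [apply ball_Rabs, Rabs_def1; unfold z; lra | unfold z; lra]. }
  assert (Hxz := Hg x z Hx ltac:(unfold z; lra)).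
  rewrite (Rabs_right (x - z)) in Hxz by (unfold z; lra).
  assert (K * (x - z) <= K * (x - a)) by (apply Rmult_le_compat_l; unfold z; lra).
  replace (g x - l) with ((g x - g z) + (g z - l)) by ring.
  pose proof (Rabs_triang (g x - g z) (g z - l)). lra.
Qed.

Lemma gronwall_left (f f' : R -> R) (a b k : R) :
  (forall s, a < s <= b -> is_derive f s (f' s) /\ - k * f s <= f' s) ->
  forall s, a < s <= b -> f s <= f b * exp (k * (b - s)).
Proof.
  intros Hf s Hs.
  assert (Hpsi : f s * exp (k * s) <= f b * exp (k * b)).
  { apply (le_of_deriv_nonneg (fun z => f z * exp (k * z))
      (fun z => f' z * exp (k * z) + f z * (k * exp (k * z)))); [lra|].
    intros z Hz. destruct (Hf z ltac:(lra)) as [Hd Hle]. split.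
    - apply (is_derive_mult_R f (fun z => exp (k * z))); [exact Hd | auto_derive; [auto | ring]].
    - pose proof (exp_pos (k * z)). nra. }
  replace (k * (b - s)) with (k * b + - (k * s)) by ring. rewrite exp_plus, exp_Ropp.
  pose proof (exp_pos (k * s)).
  apply Rmult_le_reg_r with (exp (k * s)); [lra|].
  replace (f b * (exp (k * b) * / exp (k * s)) * exp (k * s)) with (f b * exp (k * b))
    by (field; lra).
  exact Hpsi.
Qed.

Lemma nonneg_of_deriv_pos_at_zeros (f f' : R -> R) (s t : R) : s <= t ->
  (forall z, s <= z <= t -> is_derive f z (f' z)) ->
  (forall z, s <= z <= t -> f z = 0 -> 0 < f' z) ->
  0 <= f s -> 0 <= f t.
Proof.
  intros Hst Hd Hpos Hfs. apply Rnot_lt_le. intros Hft.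
  (* z is the last point of [s, t] where f >= 0. *)
  destruct (completeness (fun r => s <= r <= t /\ 0 <= f r)) as [z [Hub Hlub]].
  { exists t. intros r [Hr _]. lra. }
  { exists s. split; [lra | exact Hfs]. }
  assert (Hsz : s <= z) by (apply Hub; split; [lra | exact Hfs]).
  assert (Hzt : z <= t) by (apply Hlub; intros r [Hr _]; lra).
  assert (Hright : forall r, z < r <= t -> f r < 0).
  { intros r Hr. apply Rnot_le_lt. intros Hle.
    assert (r <= z) by (apply Hub; split; [lra | exact Hle]). lra. }
  assert (Hcz : continuous f z).
  { apply (ex_derive_continuous (K := R_AbsRing) (V := R_NormedModule)).
    eexists; apply Hd; lra. }
  assert (Hfz : 0 <= f z).
  { apply Rnot_lt_le. intros Hlt.
    destruct (continuous_eps f z Hcz (- f z) ltac:(lra)) as [d [Hd0 Hdz]].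
    assert (z <= z - d); [|lra]. apply Hlub. intros r [Hr1 Hr2].
    apply Rnot_lt_le. intros Hlt2. specialize (Hub r (conj Hr1 Hr2)).
    specialize (Hdz r ltac:(apply Rabs_def1; lra)). apply Rabs_def2 in Hdz. lra. }
  assert (Hzt' : z < t) by (destruct (Req_dec z t) as [->|]; lra).
  assert (Hnear : forall d, 0 < d -> exists r, z < r <= t /\ Rabs (r - z) < d).
  { intros d Hd0. exists (z + Rmin d (t - z) / 2).
    assert (0 < Rmin d (t - z)) by (apply Rmin_pos; lra).
    pose proof (Rmin_l d (t - z)). pose proof (Rmin_r d (t - z)).
    split; [lra | apply Rabs_def1; lra]. }
  assert (Hf0 : f z = 0).
  { apply Rle_antisym; [|exact Hfz]. apply Rnot_lt_le. intros Hgt.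
    destruct (continuous_eps f z Hcz (f z) Hgt) as [d [Hd0 Hdz]].
    destruct (Hnear d Hd0) as [r [Hr Hrd]].
    specialize (Hdz r Hrd). specialize (Hright r Hr). apply Rabs_def2 in Hdz. lra. }
  (* f vanishes at z and is negative just to its right, so f'(z) <= 0. *)
  destruct (is_derive_eps f z (f' z) (Hd z ltac:(lra)) (f' z) (Hpos z ltac:(lra) Hf0))
    as [d [Hd0 Hdz]].
  destruct (Hnear d Hd0) as [r [Hr Hrd]].
  specialize (Hdz r ltac:(lra) Hrd). apply Rabs_def2 in Hdz.
  assert (Hq : (f r - f z) / (r - z) < 0).
  { rewrite Hf0, Rminus_0_r. apply Rdiv_neg_pos; [apply Hright, Hr | lra]. }
  lra.
Qed.

Lemma limit_at_left_end (w w' : R -> R) (A c K B : R) : A < c -> 0 <= K ->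
  (forall s, A < s <= c -> is_derive w s (w' s) /\ Rabs (w' s) <= K /\ Rabs (w s) <= B) ->
  exists w0, Rabs w0 <= B /\ forall s, A < s <= c -> Rabs (w s - w0) <= K * (s - A).
Proof.
  intros Hc HK H.
  destruct (lipschitz_limit_at_right w A c K Hc HK) as [w0 [_ Hw0]].
  { apply (lipschitz_of_deriv_bound w w'). intros z Hz. split; apply H, Hz. }
  exists w0. split; [|exact Hw0].
  apply (Rle_of_le_plus_linear _ _ K (c - A)); [lra|]. intros y Hy.
  specialize (Hw0 (A + y) ltac:(lra)). destruct (H (A + y) ltac:(lra)) as [_ [_ HB]].
  replace (A + y - A) with y in Hw0 by ring.
  pose proof (Rabs_triang_inv w0 (w (A + y))). rewrite Rabs_minus_sym in Hw0. lra.
Qed.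

Lemma difference_quotient_rate (w w' : R -> R) (A c K C l w0 : R) : A < c -> 0 <= C ->
  (forall s, A < s <= c -> is_derive w s (w' s)) ->
  (forall s, A < s <= c -> Rabs (w' s - l) <= C * (s - A)) ->
  (forall s, A < s <= c -> Rabs (w s - w0) <= K * (s - A)) ->
  forall t, A < t <= c -> Rabs ((w t - w0) / (t - A) - l) <= C * (t - A).
Proof.
  intros Hc HC Hd Hw' Hw t Ht.
  assert (Hn : Rabs (w t - w0 - l * (t - A)) <= C * (t - A) * (t - A)).
  { apply (Rle_of_le_plus_linear _ _ (K + Rabs l) (t - A)); [lra|]. intros y Hy.
    destruct (MVT_closed w w' (A + y) t) as [xi [Hxi Exi]]; [lra | intros z Hz; apply Hd; lra |].
    specialize (Hw' xi ltac:(lra)). specialize (Hw (A + y) ltac:(lra)).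
    assert (E : w t - w0 - l * (t - A) = (w' xi - l) * (t - (A + y)) + (w (A + y) - w0) - l * y)
      by (rewrite <- (Rplus_minus (w (A + y)) (w t)), Exi; ring).
    rewrite E.
    assert (Hxi' : Rabs ((w' xi - l) * (t - (A + y))) <= C * (t - A) * (t - A)).
    { rewrite Rabs_mult, (Rabs_right (t - (A + y))) by lra.
      apply Rle_trans with (C * (xi - A) * (t - (A + y))); [apply Rmult_le_compat_r; lra|].
      apply Rle_trans with (C * (xi - A) * (t - A)); [apply Rmult_le_compat_l; nra|].
      apply Rmult_le_compat_r; [lra|]. apply Rmult_le_compat_l; lra. }
    unfold Rminus at 1. eapply Rle_trans; [apply Rabs_triang|].
    rewrite Rabs_Ropp, Rabs_mult, (Rabs_right y) by lra.
    eapply Rle_trans; [apply Rplus_le_compat_r, Rabs_triang|].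
    replace (A + y - A) with y in Hw by ring. lra. }
  replace ((w t - w0) / (t - A) - l) with ((w t - w0 - l * (t - A)) / (t - A)) by (field; lra).
  unfold Rdiv. rewrite Rabs_mult, Rabs_inv, (Rabs_right (t - A)) by lra.
  apply Rmult_le_reg_r with (t - A); [lra|].
  rewrite Rmult_assoc, Rinv_l by lra. lra.
Qed.

Lemma ex_RInt_continuous_R (g : R -> R) (a b : R) : (forall z, continuous g z) -> ex_RInt g a b.
Proof. intros H. apply (ex_RInt_continuous (V := R_CompleteNormedModule)). intros; apply H. Qed.

Lemma RInt_abs_le_const (g : R -> R) (a b M : R) : ex_RInt g a b ->
  (forall z, Rmin a b <= z <= Rmax a b -> Rabs (g z) <= M) ->
  Rabs (RInt g a b) <= Rabs (b - a) * M.
Proof.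
  intros Hex H. apply (norm_RInt_le_const_abs (V := R_NormedModule) g a b); auto.
  apply (RInt_correct (V := R_CompleteNormedModule)), Hex.
Qed.

Lemma RInt_minus_R (g h : R -> R) (a b : R) :
  (forall z, continuous g z) -> (forall z, continuous h z) ->
  RInt g a b - RInt h a b = RInt (fun s => g s - h s) a b.
Proof.
  intros Hg Hh. symmetry.
  apply (RInt_minus (V := R_CompleteNormedModule)); apply ex_RInt_continuous_R; auto.
Qed.

Lemma is_lim_seq_abs_le (v : nat -> R) (l c B : R) (N : nat) : is_lim_seq v l ->
  (forall k, (N <= k)%nat -> Rabs (v k - c) <= B) -> Rabs (l - c) <= B.
Proof.
  intros Hl H. apply (is_lim_seq_incr_n _ N) in Hl.
  assert (Hc := is_lim_seq_abs _ _ (is_lim_seq_minus' _ _ _ _ Hl (is_lim_seq_const c))).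
  assert (Hle := is_lim_seq_le _ _ _ _ (fun k => H (k + N)%nat ltac:(lia)) Hc (is_lim_seq_const B)).
  exact Hle.
Qed.

Lemma eq_0_of_le_half_pow (x C : R) : (forall n, Rabs x <= C * (/ 2) ^ n) -> x = 0.
Proof.
  intros H.
  assert (Hg := is_lim_seq_scal_l _ C _ (is_lim_seq_geom (/ 2) ltac:(rewrite Rabs_right; lra))).
  assert (Hle := is_lim_seq_le _ _ _ _ H (is_lim_seq_const (Rabs x)) Hg).
  simpl in Hle. rewrite Rmult_0_r in Hle.
  destruct (Req_dec x 0) as [|Hx]; auto. apply Rabs_pos_lt in Hx. lra.
Qed.

Lemma has_deriv_on_eps (D : R -> Prop) (f f' : R -> R) :
  has_deriv_on D f f' <->
  forall s, D s -> forall eps, 0 < eps -> exists d, 0 < d /\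
    forall t, D t -> t <> s -> Rabs (t - s) < d ->
      Rabs ((f t - f s) / (t - s) - f' s) < eps.
Proof.
  split.
  - intros H s Ds eps He. specialize (H s Ds).
    apply filterlim_locally with (eps := mkposreal eps He) in H.
    destruct H as [d Hd]. exists d. split; [apply cond_pos|].
    intros t Dt ts Hts. apply (Hd t Hts (conj Dt ts)).
  - intros H s Ds. apply filterlim_locally. intros eps.
    destruct (H s Ds eps (cond_pos eps)) as [d [Hd Hd']].
    exists (mkposreal d Hd). intros t Ht [Dt ts]. apply Hd'; auto.
Qed.

Lemma has_deriv_on_ext (D : R -> Prop) (f f1 f2 : R -> R) :
  (forall s, D s -> f1 s = f2 s) -> has_deriv_on D f f1 -> has_deriv_on D f f2.
Proof. intros E H s Ds. rewrite <- (E s Ds). apply H, Ds. Qed.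

Lemma has_deriv_on_interior (D : R -> Prop) (f f' : R -> R) (s r : R) :
  has_deriv_on D f f' -> 0 < r -> (forall t, Rabs (t - s) < r -> D t) ->
  is_derive f s (f' s).
Proof.
  intros H Hr HD. assert (Ds : D s) by (apply HD; rewrite Rminus_diag, Rabs_R0; lra).
  apply is_derive_Reals. intros eps He.
  destruct (proj1 (has_deriv_on_eps D f f') H s Ds eps He) as [d [Hd Hd']].
  assert (Hm : 0 < Rmin d r) by (apply Rmin_pos; auto).
  exists (mkposreal _ Hm). intros h h0 Hh. simpl in Hh.
  pose proof (Rmin_l d r). pose proof (Rmin_r d r).
  replace h with ((s + h) - s) at 2 by ring.
  apply Hd'; replace (s + h - s) with h by ring; try lra.
  apply HD. replace (s + h - s) with h by ring. lra.
Qed.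

Lemma has_deriv_on_const (D : R -> Prop) (k : R) : has_deriv_on D (fun _ => k) (fun _ => 0).
Proof.
  intros s _. eapply filterlim_ext_loc; [|apply filterlim_const].
  exists (mkposreal 1 Rlt_0_1). intros t _ [_ ts]. field. intro; apply ts; lra.
Qed.

Lemma has_deriv_on_left_int_interior (A : R) (f f' : R -> R) (s : R) :
  has_deriv_on (left_int (Finite A)) f f' -> A < s < 0 -> is_derive f s (f' s).
Proof.
  intros H Hs. apply (has_deriv_on_interior _ _ _ s (Rmin (s - A) (- s)) H); [apply Rmin_pos; lra|].
  intros t Ht. pose proof (Rmin_l (s - A) (- s)). pose proof (Rmin_r (s - A) (- s)).
  apply Rabs_def2 in Ht. split; simpl; lra.
Qed.

Definition glue_at (A : R) (f g : R -> R) (t : R) : R := if Rle_dec t A then f t else g t.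

Lemma has_deriv_on_glue (a' A c K C : R) (Phi dPhi U dU : R -> R) :
  a' < A -> A < c -> c < 0 -> 0 <= C ->
  (forall s, a' < s <= A -> is_derive Phi s (dPhi s)) ->
  has_deriv_on (left_int (Finite A)) U dU ->
  (forall s, A < s <= c -> Rabs (U s - Phi A) <= K * (s - A)) ->
  (forall s, A < s <= c -> Rabs (dU s - dPhi A) <= C * (s - A)) ->
  has_deriv_on (left_int (Finite a')) (glue_at A Phi U) (glue_at A dPhi dU).
Proof.
  intros Ha' HAc Hc HC HPhi HU HUA HdUA.
  assert (Hrate := difference_quotient_rate U dU A c K C (dPhi A) (Phi A) HAc HC
    (fun s Hs => has_deriv_on_left_int_interior A U dU s HU ltac:(lra)) HdUA HUA).
  apply has_deriv_on_eps. intros s [Hs1 Hs2] eps He. simpl in Hs1. unfold glue_at.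
  destruct (Rtotal_order s A) as [Hlt | [-> | Hgt]].
  - destruct (is_derive_eps Phi s (dPhi s) (HPhi s ltac:(lra)) eps He) as [d [Hd Hd']].
    exists (Rmin d (A - s)). split; [apply Rmin_pos; lra|].
    intros t _ ts Hts. pose proof (Rmin_l d (A - s)). pose proof (Rmin_r d (A - s)).
    pose proof (Rabs_def2 _ _ Hts).
    destruct (Rle_dec t A); [|lra]. destruct (Rle_dec s A); [|lra]. apply Hd'; [exact ts | lra].
  - destruct (is_derive_eps Phi A (dPhi A) (HPhi A ltac:(lra)) eps He) as [d [Hd Hd']].
    set (e := eps / (C + 1)).
    assert (Hee : C * e < eps) by (unfold e; apply Rmult_lt_reg_r with (C + 1); [lra|];
      replace (C * (eps / (C + 1)) * (C + 1)) with (C * eps) by (field; lra); nra).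
    exists (Rmin d (Rmin (c - A) e)).
    split; [repeat apply Rmin_pos; try lra; apply Rdiv_lt_0_compat; lra|].
    intros t [Ht1 Ht2] ts Hts.
    pose proof (Rmin_l d (Rmin (c - A) e)). pose proof (Rmin_r d (Rmin (c - A) e)).
    pose proof (Rmin_l (c - A) e). pose proof (Rmin_r (c - A) e).
    pose proof (Rabs_def2 _ _ Hts).
    destruct (Rle_dec A A); [|lra]. destruct (Rle_dec t A).
    + apply Hd'; [exact ts | lra].
    + eapply Rle_lt_trans; [apply Hrate; lra|].
      apply Rle_lt_trans with (C * e); [apply Rmult_le_compat_l; lra | exact Hee].
  - destruct (proj1 (has_deriv_on_eps _ U dU) HU s ltac:(split; simpl; lra) eps He) as [d [Hd Hd']].
    exists (Rmin d (s - A)). split; [apply Rmin_pos; lra|].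
    intros t [Ht1 Ht2] ts Hts. pose proof (Rmin_l d (s - A)). pose proof (Rmin_r d (s - A)).
    pose proof (Rabs_def2 _ _ Hts).
    destruct (Rle_dec t A); [lra|]. destruct (Rle_dec s A); [lra|].
    apply Hd'; [split; simpl; lra | exact ts | lra].
Qed.

(** * Picard iteration *)

Definition clamp (lo hi x : R) : R := Rmax lo (Rmin hi x).

Lemma clamp_id (lo hi x : R) : lo <= x <= hi -> clamp lo hi x = x.
Proof. intros H. unfold clamp, Rmax, Rmin. repeat destruct Rle_dec; lra. Qed.

Lemma clamp_range (lo hi x : R) : lo <= hi -> lo <= clamp lo hi x <= hi.
Proof. intros H. unfold clamp, Rmax, Rmin. repeat destruct Rle_dec; lra. Qed.

Lemma clamp_lipschitz (lo hi x y : R) : lo <= hi ->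
  Rabs (clamp lo hi x - clamp lo hi y) <= Rabs (x - y).
Proof.
  intros H. pose proof (Rle_abs (x - y)). pose proof (Rle_abs (- (x - y))).
  rewrite Rabs_Ropp in *. unfold clamp, Rmax, Rmin. apply Rabs_le. repeat destruct Rle_dec; lra.
Qed.

(* A vector field on R^3 is encoded as [F : nat -> R -> R -> R -> R], [F i] being its
   i-th component; curves are encoded likewise as [X : nat -> R -> R]. *)
Definition along (F : nat -> R -> R -> R -> R) (X : nat -> R -> R) (i : nat) (s : R) : R :=
  F i (X 0%nat s) (X 1%nat s) (X 2%nat s).

Section Picard.

Variables (F : nat -> R -> R -> R -> R) (x0 : nat -> R) (A eps K L : R).
Hypotheses (HK : 0 <= K) (HL : 0 <= L) (Heps : 0 < eps) (Hsmall : 3 * L * eps <= / 2)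
  (HFb : forall i a b c, Rabs (F i a b c) <= K)
  (HFl : forall i a b c a' b' c',
     Rabs (F i a b c - F i a' b' c') <= L * (Rabs (a - a') + Rabs (b - b') + Rabs (c - c'))).

Fixpoint picard_iter (n : nat) : nat -> R -> R :=
  match n with
  | O => fun i _ => x0 i
  | S m => fun i t => x0 i + RInt (along F (picard_iter m) i) A t
  end.

Lemma along_continuous (X : nat -> R -> R) (i : nat) :
  (forall j t t', Rabs (X j t - X j t') <= K * Rabs (t - t')) ->
  forall z, continuous (along F X i) z.
Proof.
  intros HX z. apply (lipschitz_continuous _ (L * (3 * K))). intros y w.
  eapply Rle_trans; [apply HFl|]. rewrite Rmult_assoc. apply Rmult_le_compat_l; [exact HL|].
  pose proof (HX 0%nat y w). pose proof (HX 1%nat y w). pose proof (HX 2%nat y w). lra.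
Qed.

Lemma RInt_along_bound (X : nat -> R -> R) (i : nat) (t : R) :
  (forall j t t', Rabs (X j t - X j t') <= K * Rabs (t - t')) ->
  Rabs (RInt (along F X i) A t) <= K * Rabs (t - A).
Proof.
  intros HX. rewrite Rmult_comm. apply RInt_abs_le_const.
  - apply ex_RInt_continuous_R, along_continuous, HX.
  - intros; apply HFb.
Qed.

(* The contraction estimate behind the choice [3 L eps <= 1/2]. *)
Lemma RInt_along_contract (X Y : nat -> R -> R) (i : nat) (t d : R) :
  (forall j t t', Rabs (X j t - X j t') <= K * Rabs (t - t')) ->
  (forall j t t', Rabs (Y j t - Y j t') <= K * Rabs (t - t')) ->
  A - eps <= t <= A -> 0 <= d ->
  (forall j z, A - eps <= z <= A -> Rabs (X j z - Y j z) <= d) ->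
  Rabs (RInt (along F X i) A t - RInt (along F Y i) A t) <= d / 2.
Proof.
  intros HX HY Ht Hd Hclose.
  rewrite RInt_minus_R by (apply along_continuous; auto).
  eapply Rle_trans; [apply RInt_abs_le_const|].
  - apply ex_RInt_continuous_R. intros z.
    apply (continuous_minus (V := R_NormedModule)); apply along_continuous; auto.
  - intros z Hz. rewrite Rmin_right, Rmax_left in Hz by lra.
    eapply Rle_trans; [apply HFl|].
    pose proof (Hclose 0%nat z ltac:(lra)). pose proof (Hclose 1%nat z ltac:(lra)).
    pose proof (Hclose 2%nat z ltac:(lra)).
    apply Rmult_le_compat_l with (r := L) (r2 := 3 * d); [exact HL | lra].
  - rewrite Rabs_left1 by lra.
    apply Rle_trans with (eps * (L * (3 * d))); [apply Rmult_le_compat_r; nra|].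
    nra.
Qed.

Lemma picard_iter_lipschitz (n : nat) :
  forall j t t', Rabs (picard_iter n j t - picard_iter n j t') <= K * Rabs (t - t').
Proof.
  induction n as [|n IH]; intros j t t'; simpl.
  - rewrite Rminus_diag, Rabs_R0. apply Rmult_le_pos; [exact HK | apply Rabs_pos].
  - set (g := along F (picard_iter n) j).
    assert (Hint : forall a b, ex_RInt g a b)
      by (intros; apply ex_RInt_continuous_R, along_continuous, IH).
    assert (Hch := RInt_Chasles (V := R_CompleteNormedModule) g A t' t (Hint A t') (Hint t' t)).
    change (RInt g A t' + RInt g t' t = RInt g A t) in Hch.
    rewrite Rminus_plus_l_l, <- Hch, Rplus_minus_l.
    rewrite Rmult_comm. apply RInt_abs_le_const; [apply Hint | intros; apply HFb].
Qed.

Lemma picard_iter_step (n : nat) (i : nat) (t : R) : A - eps <= t <= A ->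
  Rabs (picard_iter (S n) i t - picard_iter n i t) <= K * eps * (/ 2) ^ n.
Proof.
  revert i t. induction n as [|n IH]; intros i t Ht.
  - change (Rabs (x0 i + RInt (along F (picard_iter 0) i) A t - x0 i) <= K * eps * 1).
    rewrite Rplus_minus_l.
    eapply Rle_trans; [apply RInt_along_bound, picard_iter_lipschitz|].
    rewrite Rabs_left1 by lra. rewrite Rmult_1_r. apply Rmult_le_compat_l; lra.
  - change (Rabs (x0 i + RInt (along F (picard_iter (S n)) i) A t
      - (x0 i + RInt (along F (picard_iter n) i) A t)) <= K * eps * (/ 2 * (/ 2) ^ n)).
    rewrite Rminus_plus_l_l.
    eapply Rle_trans; [apply RInt_along_contract with (d := K * eps * (/ 2) ^ n)|];
      try apply picard_iter_lipschitz; auto.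
    + apply Rmult_le_pos; [nra | apply pow_le; lra].
    + right; field.
Qed.

Lemma picard_iter_tail (n k i : nat) (t : R) : A - eps <= t <= A ->
  Rabs (picard_iter (n + k) i t - picard_iter n i t)
    <= 2 * K * eps * (/ 2) ^ n - 2 * K * eps * (/ 2) ^ (n + k).
Proof.
  intros Ht. induction k as [|k IH].
  - rewrite Nat.add_0_r, Rminus_diag, Rabs_R0. lra.
  - replace (n + S k)%nat with (S (n + k)) by lia.
    replace (picard_iter (S (n + k)) i t - picard_iter n i t)
      with ((picard_iter (S (n + k)) i t - picard_iter (n + k) i t)
            + (picard_iter (n + k) i t - picard_iter n i t)) by ring.
    eapply Rle_trans; [apply Rabs_triang|].
    pose proof (picard_iter_step (n + k) i t Ht). simpl pow. lra.
Qed.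

Lemma picard_iter_cauchy (i : nat) (t : R) : A - eps <= t <= A ->
  ex_finite_lim_seq (fun n => picard_iter n i t).
Proof.
  intros Ht. apply ex_lim_seq_cauchy_corr. intros e.
  assert (He : 0 < e / (2 * K * eps + 1)) by (apply Rdiv_lt_0_compat; [apply cond_pos | nra]).
  destruct (pow_lt_1_zero (/ 2) ltac:(rewrite Rabs_right; lra) _ He) as [N HN].
  assert (Hq : e / (2 * K * eps + 1) * (2 * K * eps + 1) = e) by (field; nra).
  assert (Hb : forall p q, (N <= p <= q)%nat -> Rabs (picard_iter q i t - picard_iter p i t) < e).
  { intros p q Hpq. replace q with (p + (q - p))%nat by lia.
    eapply Rle_lt_trans; [apply picard_iter_tail, Ht|].
    specialize (HN p ltac:(lia)). rewrite Rabs_right in HN by (apply Rle_ge, pow_le; lra).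
    assert (0 <= (/ 2) ^ (p + (q - p))) by (apply pow_le; lra).
    assert (0 <= 2 * K * eps) by nra.
    assert (2 * K * eps * (/ 2) ^ p <= (2 * K * eps + 1) * (/ 2) ^ p)
      by (pose proof (pow_le (/ 2) p); nra).
    assert ((2 * K * eps + 1) * (/ 2) ^ p < e) by (rewrite <- Hq; nra).
    nra. }
  exists N. intros n m Hn Hm. destruct (Nat.le_ge_cases n m).
  - rewrite Rabs_minus_sym. apply Hb. lia.
  - apply Hb. lia.
Qed.

(* Evaluating at [clamp (A - eps) A t] makes the limit exist, and be Lipschitz, on all of R. *)
Definition picard_limit (i : nat) (t : R) : R :=
  real (Lim_seq (fun n => picard_iter n i (clamp (A - eps) A t))).

Lemma picard_limit_correct (i : nat) (t : R) :
  is_lim_seq (fun n => picard_iter n i (clamp (A - eps) A t)) (picard_limit i t).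
Proof. apply Lim_seq_correct', picard_iter_cauchy, clamp_range. lra. Qed.

Lemma picard_limit_lipschitz (i : nat) (t t' : R) :
  Rabs (picard_limit i t - picard_limit i t') <= K * Rabs (t - t').
Proof.
  assert (Hlim := is_lim_seq_minus' _ _ _ _ (picard_limit_correct i t) (picard_limit_correct i t')).
  rewrite <- (Rminus_0_r (picard_limit i t - picard_limit i t')).
  apply (is_lim_seq_abs_le _ _ 0 _ 0 Hlim).
  intros k _. rewrite Rminus_0_r. eapply Rle_trans; [apply picard_iter_lipschitz|].
  apply Rmult_le_compat_l; [exact HK | apply clamp_lipschitz; lra].
Qed.

Lemma picard_limit_close (n i : nat) (t : R) : A - eps <= t <= A ->
  Rabs (picard_limit i t - picard_iter n i t) <= 2 * K * eps * (/ 2) ^ n.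
Proof.
  intros Ht. pose proof (picard_limit_correct i t) as H. rewrite clamp_id in H by exact Ht.
  apply (is_lim_seq_abs_le _ _ _ _ n H). intros k Hk. replace k with (n + (k - n))%nat by lia.
  eapply Rle_trans; [apply picard_iter_tail, Ht|].
  assert (0 <= 2 * K * eps * (/ 2) ^ (n + (k - n)))
    by (apply Rmult_le_pos; [nra | apply pow_le; lra]).
  lra.
Qed.

Definition picard_sol (i : nat) (t : R) : R := x0 i + RInt (along F picard_limit i) A t.

Lemma picard_sol_deriv (i : nat) (t : R) : is_derive (picard_sol i) t (along F picard_limit i t).
Proof.
  assert (Hc : forall z, continuous (along F picard_limit i) z)
    by (apply along_continuous, picard_limit_lipschitz).
  assert (H : is_derive (fun t => RInt (along F picard_limit i) A t) t (along F picard_limit i t)).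
  { apply (is_derive_RInt (V := R_NormedModule) _ _ A); [|apply Hc].
    exists (mkposreal 1 Rlt_0_1). intros b _.
    apply (RInt_correct (V := R_CompleteNormedModule)), ex_RInt_continuous_R, Hc. }
  pose proof (is_derive_plus _ _ t _ _ (is_derive_const (x0 i) t) H) as H2.
  rewrite (plus_zero_l (G := R_AbelianGroup)) in H2. exact H2.
Qed.

(* [picard_sol] is the Picard map applied to [picard_limit]; the contraction estimate makes
   the two agree on [A - eps, A]. *)
Lemma picard_sol_eq (i : nat) (t : R) : A - eps <= t <= A -> picard_sol i t = picard_limit i t.
Proof.
  intros Ht. apply Rminus_diag_uniq, (eq_0_of_le_half_pow _ (2 * K * eps)). intros n.
  replace (picard_sol i t - picard_limit i t)
    with ((RInt (along F picard_limit i) A t - RInt (along F (picard_iter n) i) A t)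
          + (picard_iter (S n) i t - picard_limit i t)) by (unfold picard_sol; simpl; ring).
  eapply Rle_trans; [apply Rabs_triang|].
  assert (Hsol := RInt_along_contract picard_limit (picard_iter n) i t (2 * K * eps * (/ 2) ^ n)
    (picard_limit_lipschitz) (picard_iter_lipschitz n) Ht
    ltac:(apply Rmult_le_pos; [nra | apply pow_le; lra]) (picard_limit_close n)).
  assert (Hiter := picard_limit_close (S n) i t Ht).
  rewrite Rabs_minus_sym in Hiter. simpl pow in Hiter.
  lra.
Qed.

Lemma picard_sol_at (i : nat) : picard_sol i A = x0 i.
Proof. unfold picard_sol. rewrite RInt_point. unfold zero; simpl. ring. Qed.

Theorem picard_existence : exists ph : nat -> R -> R,
  (forall i t, A - eps <= t <= A -> is_derive (ph i) t (along F ph i t)) /\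
  (forall i, ph i A = x0 i) /\
  (forall i t, A - eps <= t <= A -> Rabs (ph i t - x0 i) <= K * eps).
Proof.
  exists picard_sol. split; [|split].
  - intros i t Ht. unfold along at 1. rewrite !picard_sol_eq by exact Ht. apply picard_sol_deriv.
  - apply picard_sol_at.
  - intros i t Ht. unfold picard_sol.
    rewrite Rplus_minus_l.
    eapply Rle_trans; [apply RInt_along_bound, picard_limit_lipschitz|].
    apply Rmult_le_compat_l; [exact HK|]. rewrite Rabs_left1; lra.
Qed.

End Picard.

(** * The function u |-> delta (u ^ 2) *)

Lemma filterlim_sqrt_at_right_0 : filterlim sqrt (at_right 0) (at_right 0).
Proof.
  intros P [d Hd].
  assert (Hd2 : 0 < d * d) by (pose proof (cond_pos d); nra).
  exists (mkposreal _ Hd2). intros r Hr Hr0.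
  assert (Hr' : Rabs (r - 0) < d * d) by exact Hr.
  rewrite Rminus_0_r, Rabs_right in Hr' by lra.
  apply Hd; [|apply sqrt_lt_R0, Hr0].
  apply ball_Rabs. rewrite Rminus_0_r, Rabs_right by (apply Rle_ge, sqrt_pos).
  rewrite <- (sqrt_square d) by (left; apply cond_pos). apply sqrt_lt_1_alt. lra.
Qed.

Lemma delta0_eq (delta : R -> R) (l : R) :
  filterlim delta (at_right 0) (locally l) -> delta0 delta = l.
Proof.
  intros Hl.
  assert (H0 : filterlim delta (at_right 0) (locally (delta0 delta))).
  { apply (epsilon_spec (inhabits 0) (fun l => filterlim delta (at_right 0) (locally l))).
    exists l; exact Hl. }
  apply (@filterlim_locally_unique R R_AbsRing R_NormedModule (at_right 0)
    (Proper_StrongProper _ (at_right_proper_filter 0)) delta); assumption.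
Qed.

Definition delta_sq (delta : R -> R) (x : R) : R := delta_ext delta (x ^ 2).

Lemma delta_sq_neq0 (delta : R -> R) (x : R) : x <> 0 -> delta_sq delta x = delta (Rabs x * Rabs x).
Proof.
  intros Hx. unfold delta_sq, delta_ext. rewrite <- Rabs_mult, <- Rsqr_pow2.
  rewrite Rabs_right by apply Rle_ge, Rle_0_sqr.
  destruct (Rlt_dec 0 (Rsqr x)) as [|Hn]; [reflexivity|]. exfalso. apply Hn, Rlt_0_sqr, Hx.
Qed.

Lemma delta_sq_0 (delta : R -> R) : delta_sq delta 0 = delta0 delta.
Proof. unfold delta_sq, delta_ext. destruct Rlt_dec as [H|]; [|reflexivity]. simpl in H. lra. Qed.

Section DeltaRegularity.

Variables (delta : R -> R) (M : R).
Hypotheses (Hnonneg : forall r, 0 < r -> 0 <= delta r)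
  (Hbound : forall r, 0 < r -> Rabs (delta r) <= M)
  (Hder : forall r, 0 < r -> ex_derive delta r)
  (Hcont : forall r, 0 < r -> continuous (Derive delta) r)
  (Hlim : filterlim (fun r => sqrt r * Derive delta r) (at_right 0) (locally 0)).

(* Continuity handles [a, R0]; the hypothesis at 0 handles ]0, a]. *)
Lemma sqrt_Derive_bounded (R0 : R) : 0 < R0 -> exists G, 0 <= G /\
  forall r, 0 < r <= R0 -> Rabs (sqrt r * Derive delta r) <= G.
Proof.
  intros HR0.
  pose proof (proj1 (filterlim_locally _ _) Hlim (mkposreal 1 Rlt_0_1)) as [eta Heta].
  set (a := Rmin (eta / 2) R0).
  assert (Ha : 0 < a) by (apply Rmin_pos; [pose proof (cond_pos eta); lra | lra]).
  assert (Haeta : a <= eta / 2) by apply Rmin_l.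
  set (g := fun r => Rabs (sqrt r * Derive delta r)).
  destruct (continuity_ab_maj g a R0 (Rmin_r _ _)) as [r0 [Hr0 _]].
  { intros c Hc. apply (continuity_pt_comp (fun r => sqrt r * Derive delta r) Rabs);
      [|apply Rcontinuity_abs].
    apply continuity_pt_mult; [apply continuity_pt_sqrt; lra|].
    apply continuity_pt_filterlim, Hcont. lra. }
  exists (Rmax 1 (g r0)). split; [apply Rle_trans with 1; [lra | apply Rmax_l]|].
  intros r Hr. destruct (Rle_or_lt a r) as [Har | Har].
  - eapply Rle_trans; [apply (Hr0 r); lra | apply Rmax_r].
  - eapply Rle_trans; [|apply Rmax_l].
    assert (Hb : ball 0 eta r)
      by (apply ball_Rabs; rewrite Rminus_0_r, Rabs_right; pose proof (cond_pos eta); lra).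
    assert (H1 : Rabs (sqrt r * Derive delta r - 0) < 1) by exact (Heta r Hb ltac:(lra)).
    rewrite Rminus_0_r in H1. left; exact H1.
Qed.

Lemma is_derive_delta_sq_pos (x : R) : 0 < x ->
  is_derive (fun z => delta (z * z)) x (2 * x * Derive delta (x * x)).
Proof.
  intros Hx.
  assert (H1 : is_derive delta (x * x) (Derive delta (x * x))) by (apply Derive_correct, Hder; nra).
  assert (H2 : is_derive (fun z : R => z * z) x (2 * x)) by (auto_derive; [auto | ring]).
  exact (is_derive_comp delta (fun z => z * z) x _ _ H1 H2).
Qed.

(* t |-> delta (t * t) has derivative 2 sqrt(t^2) delta'(t^2), bounded by the previous lemma. *)
Lemma delta_sq_limit (Rb : R) : 0 < Rb -> exists G l, 0 <= G /\
  filterlim delta (at_right 0) (locally l) /\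
  (forall x y, 0 < x <= Rb -> 0 < y <= Rb ->
    Rabs (delta (x * x) - delta (y * y)) <= G * Rabs (x - y)) /\
  (forall x, 0 < x <= Rb -> Rabs (delta (x * x) - l) <= G * x).
Proof.
  intros HRb. destruct (sqrt_Derive_bounded (Rb * Rb)) as [G [HG HGb]]; [nra|].
  assert (Hlip : forall x y, 0 < x <= Rb -> 0 < y <= Rb ->
    Rabs (delta (x * x) - delta (y * y)) <= 2 * G * Rabs (x - y)).
  { apply (lipschitz_of_deriv_bound _ (fun z => 2 * z * Derive delta (z * z))).
    intros z Hz. split; [apply is_derive_delta_sq_pos; lra|].
    specialize (HGb (z * z) ltac:(split; nra)). rewrite sqrt_square in HGb by lra.
    rewrite Rmult_assoc, Rabs_mult, (Rabs_right 2) by lra. lra. }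
  destruct (lipschitz_limit_at_right _ 0 Rb (2 * G) HRb ltac:(lra) Hlip) as [l [Hl Hrate]].
  exists (2 * G), l. split; [lra|]. split; [|split; [exact Hlip|]].
  - eapply filterlim_ext_loc;
      [|exact (filterlim_comp _ _ _ sqrt _ _ _ _ filterlim_sqrt_at_right_0 Hl)].
    exists (mkposreal 1 Rlt_0_1). intros r _ Hr. simpl. rewrite sqrt_sqrt; lra.
  - intros x Hx. specialize (Hrate x Hx). rewrite Rminus_0_r in Hrate. exact Hrate.
Qed.

Lemma delta_sq_bounds (x : R) : 0 <= delta_sq delta x <= M.
Proof.
  destruct (Req_dec x 0) as [->|Hx].
  - destruct (delta_sq_limit 1 Rlt_0_1) as [G [l [HG [Hl [_ Hrate]]]]].
    rewrite delta_sq_0, (delta0_eq _ _ Hl).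
    split; apply (Rle_of_le_plus_linear _ _ G 1); try lra; intros y Hy;
      specialize (Hrate y ltac:(lra)); apply Rabs_le_between in Hrate;
      pose proof (Hnonneg (y * y) ltac:(nra));
      pose proof (Hbound (y * y) ltac:(nra)) as Hy'; apply Rabs_le_between in Hy'; lra.
  - rewrite delta_sq_neq0 by exact Hx. pose proof (Rabs_pos_lt x Hx).
    split; [apply Hnonneg; nra|].
    pose proof (Hbound (Rabs x * Rabs x) ltac:(nra)) as Hb. apply Rabs_le_between in Hb. lra.
Qed.

Lemma delta_sq_lipschitz (R0 : R) : 0 < R0 -> exists G, 0 <= G /\
  forall x y, Rabs x <= R0 -> Rabs y <= R0 ->
    Rabs (delta_sq delta x - delta_sq delta y) <= G * Rabs (x - y).
Proof.
  intros HR0. destruct (delta_sq_limit R0 HR0) as [G [l [HG [Hl [Hlip Hrate]]]]].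
  rewrite <- (delta0_eq _ _ Hl) in Hrate.
  exists G. split; [exact HG|]. intros x y Hx Hy.
  destruct (Req_dec x 0) as [->|Hxn]; destruct (Req_dec y 0) as [->|Hyn].
  - rewrite !Rminus_diag, !Rabs_R0. lra.
  - rewrite delta_sq_0, delta_sq_neq0, Rabs_minus_sym, Rminus_0_l, Rabs_Ropp by exact Hyn.
    apply Hrate. split; [apply Rabs_pos_lt|]; auto.
  - rewrite delta_sq_0, delta_sq_neq0, Rminus_0_r by exact Hxn.
    apply Hrate. split; [apply Rabs_pos_lt|]; auto.
  - rewrite !delta_sq_neq0 by assumption.
    eapply Rle_trans; [apply Hlip; split; auto; apply Rabs_pos_lt; auto|].
    apply Rmult_le_compat_l; [exact HG | apply Rabs_triang_inv2].
Qed.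

End DeltaRegularity.

(** * The system and its clamped version *)

Definition bounded_lipschitz3 (f : R -> R -> R -> R) : Prop :=
  exists B L, 0 <= B /\ 0 <= L /\ (forall a b c, Rabs (f a b c) <= B) /\
    forall a b c a' b' c',
      Rabs (f a b c - f a' b' c') <= L * (Rabs (a - a') + Rabs (b - b') + Rabs (c - c')).

Lemma dist3_nonneg (a b c a' b' c' : R) : 0 <= Rabs (a - a') + Rabs (b - b') + Rabs (c - c').
Proof.
  pose proof (Rabs_pos (a - a')). pose proof (Rabs_pos (b - b')). pose proof (Rabs_pos (c - c')).
  lra.
Qed.

Lemma bounded_lipschitz3_const (k : R) : bounded_lipschitz3 (fun _ _ _ => k).
Proof.
  exists (Rabs k), 0. repeat split; [apply Rabs_pos | lra | intros; lra |].
  intros. rewrite Rminus_diag, Rabs_R0. lra.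
Qed.

Lemma bounded_lipschitz3_plus (f g : R -> R -> R -> R) :
  bounded_lipschitz3 f -> bounded_lipschitz3 g ->
  bounded_lipschitz3 (fun a b c => f a b c + g a b c).
Proof.
  intros [B1 [L1 [HB1 [HL1 [Hb1 Hl1]]]]] [B2 [L2 [HB2 [HL2 [Hb2 Hl2]]]]].
  exists (B1 + B2), (L1 + L2). repeat split; try lra.
  - intros. eapply Rle_trans; [apply Rabs_triang|].
    pose proof (Hb1 a b c). pose proof (Hb2 a b c). lra.
  - intros. replace (f a b c + g a b c - (f a' b' c' + g a' b' c'))
      with ((f a b c - f a' b' c') + (g a b c - g a' b' c')) by ring.
    eapply Rle_trans; [apply Rabs_triang|].
    pose proof (Hl1 a b c a' b' c'). pose proof (Hl2 a b c a' b' c'). lra.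
Qed.

Lemma bounded_lipschitz3_mult (f g : R -> R -> R -> R) :
  bounded_lipschitz3 f -> bounded_lipschitz3 g ->
  bounded_lipschitz3 (fun a b c => f a b c * g a b c).
Proof.
  intros [B1 [L1 [HB1 [HL1 [Hb1 Hl1]]]]] [B2 [L2 [HB2 [HL2 [Hb2 Hl2]]]]].
  exists (B1 * B2), (B1 * L2 + B2 * L1). repeat split; try nra.
  - intros. rewrite Rabs_mult. apply Rmult_le_compat; auto; apply Rabs_pos.
  - intros. replace (f a b c * g a b c - f a' b' c' * g a' b' c')
      with (f a b c * (g a b c - g a' b' c') + g a' b' c' * (f a b c - f a' b' c')) by ring.
    eapply Rle_trans; [apply Rabs_triang|]. rewrite !Rabs_mult.
    pose proof (dist3_nonneg a b c a' b' c').
    set (S := Rabs (a - a') + Rabs (b - b') + Rabs (c - c')) in *.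
    assert (Rabs (f a b c) * Rabs (g a b c - g a' b' c') <= B1 * (L2 * S))
      by (apply Rmult_le_compat; auto; apply Rabs_pos).
    assert (Rabs (g a' b' c') * Rabs (f a b c - f a' b' c') <= B2 * (L1 * S))
      by (apply Rmult_le_compat; auto; apply Rabs_pos).
    lra.
Qed.

Lemma bounded_lipschitz3_ext (f g : R -> R -> R -> R) :
  bounded_lipschitz3 f -> (forall a b c, f a b c = g a b c) -> bounded_lipschitz3 g.
Proof.
  intros [B [L [HB [HL [Hb Hl]]]]] E. exists B, L.
  repeat split; auto; intros; rewrite <- !E; auto.
Qed.

Lemma bounded_lipschitz3_proj (g : R -> R) (B L : R) : 0 <= B -> 0 <= L ->
  (forall x, Rabs (g x) <= B) -> (forall x y, Rabs (g x - g y) <= L * Rabs (x - y)) ->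
  bounded_lipschitz3 (fun a _ _ => g a) /\ bounded_lipschitz3 (fun _ b _ => g b) /\
  bounded_lipschitz3 (fun _ _ c => g c).
Proof.
  intros HB HL Hb Hl.
  repeat split; exists B, L; repeat split; auto; intros a b c a' b' c';
    pose proof (Rabs_pos (a - a')); pose proof (Rabs_pos (b - b')); pose proof (Rabs_pos (c - c'));
    eapply Rle_trans; try apply Hl; apply Rmult_le_compat_l; lra.
Qed.

Definition bounded_lipschitz_system (F : nat -> R -> R -> R -> R) (K L : R) : Prop :=
  0 <= K /\ 0 <= L /\ (forall i a b c, Rabs (F i a b c) <= K) /\
    forall i a b c a' b' c',
      Rabs (F i a b c - F i a' b' c') <= L * (Rabs (a - a') + Rabs (b - b') + Rabs (c - c')).

Lemma bounded_lipschitz3_uniform (F : nat -> R -> R -> R -> R) :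
  bounded_lipschitz3 (F 0%nat) -> bounded_lipschitz3 (F 1%nat) -> bounded_lipschitz3 (F 2%nat) ->
  (forall i a b c, F (S (S i)) a b c = F 2%nat a b c) ->
  exists K L, bounded_lipschitz_system F K L.
Proof.
  intros [B0 [L0 [? [? [Hb0 Hl0]]]]] [B1 [L1 [? [? [Hb1 Hl1]]]]] [B2 [L2 [? [? [Hb2 Hl2]]]]] HF.
  exists (B0 + B1 + B2), (L0 + L1 + L2). repeat split; try lra.
  - intros [|[|i]] a b c; rewrite ?HF;
      [pose proof (Hb0 a b c) | pose proof (Hb1 a b c) | pose proof (Hb2 a b c)]; lra.
  - intros [|[|i]] a b c a' b' c'; pose proof (dist3_nonneg a b c a' b' c').
    + apply Rle_trans with (1 := Hl0 a b c a' b' c'), Rmult_le_compat_r; lra.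
    + apply Rle_trans with (1 := Hl1 a b c a' b' c'), Rmult_le_compat_r; lra.
    + rewrite (HF i a b c), (HF i a' b' c').
      apply Rle_trans with (1 := Hl2 a b c a' b' c'), Rmult_le_compat_r; lra.
Qed.

(* The state [(a, b, c)] stands for [(u, u', E)]; every index [i >= 2] denotes the last
   component. *)
Definition rhs (h : R -> R) (i : nat) (a b c : R) : R :=
  match i with
  | O => b
  | 1%nat => c * a / 2 - h a * a ^ 2 * b
  | _ => - 4 * h a * b ^ 2
  end.

Definition state (u du E : R -> R) (i : nat) : R -> R :=
  match i with O => u | 1%nat => du | _ => E end.

Definition clamped_rhs (h : R -> R) (R0 : R) (i : nat) (a b c : R) : R :=
  rhs h i (clamp (- R0) R0 a) (clamp (- R0) R0 b) (clamp (- R0) R0 c).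

Lemma clamped_rhs_id (h : R -> R) (R0 : R) (i : nat) (a b c : R) :
  Rabs a <= R0 -> Rabs b <= R0 -> Rabs c <= R0 -> clamped_rhs h R0 i a b c = rhs h i a b c.
Proof.
  intros Ha Hb Hc. unfold clamped_rhs.
  rewrite (clamp_id _ _ a), (clamp_id _ _ b), (clamp_id _ _ c)
    by (apply Rabs_le_between; assumption).
  reflexivity.
Qed.

Lemma clamped_rhs_bounded_lipschitz (h : R -> R) (M G R0 : R) : 0 <= R0 -> 0 <= M -> 0 <= G ->
  (forall x, Rabs (h x) <= M) ->
  (forall x y, Rabs x <= R0 -> Rabs y <= R0 -> Rabs (h x - h y) <= G * Rabs (x - y)) ->
  exists K L, bounded_lipschitz_system (clamped_rhs h R0) K L.
Proof.
  intros HR HM HG Hhb Hhl.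
  set (cl := clamp (- R0) R0).
  assert (Hcl : forall x, Rabs (cl x) <= R0) by (intros; apply Rabs_le_between, clamp_range; lra).
  destruct (bounded_lipschitz3_proj cl R0 1) as [Ca [Cb Cc]]; try lra; [exact Hcl| |].
  { intros; rewrite Rmult_1_l; apply clamp_lipschitz; lra. }
  destruct (bounded_lipschitz3_proj (fun x => h (cl x)) M G) as [Ha _]; auto.
  { intros x y. eapply Rle_trans; [apply Hhl; apply Hcl|].
    apply Rmult_le_compat_l; [exact HG | apply clamp_lipschitz; lra]. }
  apply bounded_lipschitz3_uniform; [exact Cb | | | reflexivity].
  - eapply bounded_lipschitz3_ext.
    + apply bounded_lipschitz3_plus.
      * apply bounded_lipschitz3_mult; [apply bounded_lipschitz3_mult; [exact Cc | exact Ca]|].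
        apply (bounded_lipschitz3_const (/ 2)).
      * apply bounded_lipschitz3_mult; [apply (bounded_lipschitz3_const (-1))|].
        apply bounded_lipschitz3_mult; [|exact Cb].
        apply bounded_lipschitz3_mult; [exact Ha|].
        apply bounded_lipschitz3_mult; [exact Ca | exact Ca].
    + intros a b c. cbv beta. unfold clamped_rhs, rhs. fold cl. field.
  - eapply bounded_lipschitz3_ext.
    + apply bounded_lipschitz3_mult; [apply bounded_lipschitz3_mult;
        [apply (bounded_lipschitz3_const (-4)) | exact Ha]|].
      apply bounded_lipschitz3_mult; [exact Cb | exact Cb].
    + intros a b c. cbv beta. unfold clamped_rhs, rhs. fold cl. ring.
Qed.

Lemma is_solution_state (delta : R -> R) (a : Rbar) (u du E : R -> R) :
  is_solution delta a u du E <-> exists ddu dE,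
    (forall i, has_deriv_on (left_int a) (state u du E i) (state du ddu dE i)) /\
    (forall i s, left_int a s -> state du ddu dE i s = rhs (delta_sq delta) i (u s) (du s) (E s)).
Proof.
  unfold is_solution, delta_sq. split.
  - intros [ddu [dE [Hu [Hdu [HE Hode]]]]]. exists ddu, dE. split.
    + intros [|[|i]]; assumption.
    + intros [|[|i]] s Hs; cbn [state rhs]; [reflexivity | |]; destruct (Hode s Hs); lra.
  - intros [ddu [dE [Hd Hode]]]. exists ddu, dE.
    split; [apply (Hd 0%nat)|]. split; [apply (Hd 1%nat)|]. split; [apply (Hd 2%nat)|].
    intros s Hs. pose proof (Hode 1%nat s Hs). pose proof (Hode 2%nat s Hs).
    cbn [state rhs] in *. lra.
Qed.

Lemma zero_is_solution (delta : R -> R) (a : Rbar) :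
  is_solution delta a (fun _ => 0) (fun _ => 0) (fun _ => 0).
Proof.
  exists (fun _ => 0), (fun _ => 0).
  repeat split; try apply has_deriv_on_const; lra.
Qed.

Lemma is_solution_glue (delta : R -> R) (a' A : R) (ph : nat -> R -> R) (u du ddu E dE : R -> R) :
  (forall i, has_deriv_on (left_int (Finite a')) (glue_at A (ph i) (state u du E i))
     (glue_at A (along (rhs (delta_sq delta)) ph i) (state du ddu dE i))) ->
  (forall i s, left_int (Finite A) s ->
     state du ddu dE i s = rhs (delta_sq delta) i (u s) (du s) (E s)) ->
  is_solution delta (Finite a') (glue_at A (ph 0%nat) u) (glue_at A (ph 1%nat) du)
    (glue_at A (ph 2%nat) E).
Proof.
  intros Hglue Hode. apply is_solution_state.
  exists (glue_at A (along (rhs (delta_sq delta)) ph 1%nat) ddu),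
    (glue_at A (along (rhs (delta_sq delta)) ph 2%nat) dE). split.
  - intros [|[|i]]; [|apply (Hglue 1%nat) | apply (Hglue 2%nat)].
    apply (has_deriv_on_ext _ _ (glue_at A (along (rhs (delta_sq delta)) ph 0%nat) du));
      [|apply (Hglue 0%nat)].
    intros s _. cbn [state]. unfold glue_at. destruct Rle_dec; reflexivity.
  - intros [|[|i]] s [Hs1 Hs2]; cbn [state]; unfold glue_at; destruct Rle_dec; try reflexivity;
      [apply (Hode 1%nat) | apply (Hode 2%nat)]; split; simpl in *; lra.
Qed.

(** * Continuation past a bounded left end *)

Lemma state_limits_at_left_end (Y dY : nat -> R -> R) (A c K B : R) : A < c -> 0 <= K ->
  (forall i s, A < s <= c ->
     is_derive (Y i) s (dY i s) /\ Rabs (dY i s) <= K /\ Rabs (Y i s) <= B) ->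
  exists x0 : nat -> R, (forall i, Rabs (x0 i) <= B) /\
    forall i s, A < s <= c -> Rabs (Y i s - x0 i) <= K * (s - A).
Proof.
  intros Hc HK H.
  assert (Hlim : forall i,
    {w0 | Rabs w0 <= B /\ forall s, A < s <= c -> Rabs (Y i s - w0) <= K * (s - A)}).
  { intros i. apply constructive_indefinite_description.
    apply (limit_at_left_end _ (dY i) A c K B Hc HK), H. }
  exists (fun i => proj1_sig (Hlim i)). split; intros i; apply (proj2_sig (Hlim i)).
Qed.

Section Extension.

Variables (delta : R -> R) (M : R).
Hypotheses (Hbound : forall x, Rabs (delta_sq delta x) <= M)
  (Hlip : forall R0, 0 < R0 -> exists G, 0 <= G /\ forall x y, Rabs x <= R0 -> Rabs y <= R0 ->
     Rabs (delta_sq delta x - delta_sq delta y) <= G * Rabs (x - y)).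

Lemma clamped_system_bounded_lipschitz (R0 : R) : 0 < R0 ->
  exists K L, bounded_lipschitz_system (clamped_rhs (delta_sq delta) R0) K L.
Proof.
  intros HR0. destruct (Hlip R0 HR0) as [G [HG HGl]].
  apply (clamped_rhs_bounded_lipschitz _ M G); auto; [lra|].
  pose proof (Hbound 0). pose proof (Rabs_pos (delta_sq delta 0)). lra.
Qed.

(* Picard iteration for the clamped system, which agrees with the true one near the data. *)
Lemma local_existence_left (A B : R) (x0 : nat -> R) : 0 <= B -> (forall i, Rabs (x0 i) <= B) ->
  exists eps ph, 0 < eps /\ (forall i, ph i A = x0 i) /\
    forall i t, A - eps <= t <= A -> is_derive (ph i) t (along (rhs (delta_sq delta)) ph i t).
Proof.
  intros HB Hx0.
  destruct (clamped_system_bounded_lipschitz (B + 1)) as [K [L [HK [HL [HFb HFl]]]]]; [lra|].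
  set (eps := / (6 * L + K + 1)).
  assert (Heps : 0 < eps) by (apply Rinv_0_lt_compat; lra).
  assert (Heps1 : (6 * L + K + 1) * eps = 1) by (unfold eps; field; lra).
  destruct (picard_existence _ x0 A eps K L HK HL Heps ltac:(nra) HFb HFl)
    as [ph [Hph [HphA Hphx]]].
  exists eps, ph. split; [exact Heps|]. split; [exact HphA|].
  intros i t Ht.
  assert (Hphb : forall j, Rabs (ph j t) <= B + 1).
  { intros j. pose proof (Hphx j t Ht). pose proof (Hx0 j).
    pose proof (Rabs_triang_inv (ph j t) (x0 j)). nra. }
  unfold along. rewrite <- clamped_rhs_id with (R0 := B + 1) by apply Hphb. apply Hph, Ht.
Qed.

Theorem solution_extends_left (A c B : R) (u du E : R -> R) :
  A < c < 0 -> is_solution delta (Finite A) u du E ->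
  (forall s, A < s <= c -> Rabs (u s) <= B /\ Rabs (du s) <= B /\ Rabs (E s) <= B) ->
  exists (a' : Rbar) (v dv F : R -> R), Rbar_lt a' (Finite A) /\
    is_solution delta a' v dv F /\ forall s, left_int (Finite A) s -> v s = u s /\ F s = E s.
Proof.
  intros Hc Hsol HB.
  destruct (proj1 (is_solution_state _ _ _ _ _) Hsol) as [ddu [dE [Hd Hode]]].
  assert (HYB : forall i s, A < s <= c -> Rabs (state u du E i s) <= B)
    by (intros [|[|i]] s Hs; apply HB in Hs; simpl; tauto).
  assert (HB0 : 0 <= B) by (pose proof (Rabs_pos (u c)); destruct (HB c ltac:(lra)); lra).
  destruct (clamped_system_bounded_lipschitz (B + 1)) as [K [L [HK [HL [HFb HFl]]]]]; [lra|].
  set (F := clamped_rhs (delta_sq delta) (B + 1)) in *.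
  assert (HYF : forall i s, A < s <= c -> state du ddu dE i s = F i (u s) (du s) (E s)).
  { intros i s Hs. destruct (HB s Hs) as [Hu [Hdu HE]].
    unfold F. rewrite clamped_rhs_id by lra. apply Hode. split; simpl; lra. }
  destruct (state_limits_at_left_end (state u du E) (state du ddu dE) A c K B) as [x0 [Hx0 Hrate]];
    [lra | exact HK | |].
  { intros i s Hs. split; [|split].
    - apply (has_deriv_on_left_int_interior A); [apply Hd | lra].
    - rewrite HYF by exact Hs. apply HFb.
    - apply HYB, Hs. }
  destruct (local_existence_left A B x0 HB0 Hx0) as [eps [ph [Heps [HphA Hph]]]].
  exists (Finite (A - eps)), (glue_at A (ph 0%nat) u), (glue_at A (ph 1%nat) du),
    (glue_at A (ph 2%nat) E).
  split; [simpl; lra|]. split.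
  - apply (is_solution_glue _ _ _ _ _ _ ddu _ dE); [|exact Hode]. intros i.
    apply (has_deriv_on_glue (A - eps) A c K (L * (3 * K))); try lra.
    + apply Rmult_le_pos; lra.
    + intros s Hs. apply Hph. lra.
    + apply Hd.
    + intros s Hs. rewrite HphA. apply Hrate, Hs.
    + intros s Hs. rewrite HYF by exact Hs. unfold along. rewrite !HphA.
      rewrite <- clamped_rhs_id with (R0 := B + 1) by (eapply Rle_trans; [apply Hx0 | lra]).
      eapply Rle_trans; [apply HFl|]. rewrite Rmult_assoc. apply Rmult_le_compat_l; [exact HL|].
      pose proof (Hrate 0%nat s Hs). pose proof (Hrate 1%nat s Hs). pose proof (Hrate 2%nat s Hs).
      simpl in *. lra.
  - intros s [Hs1 Hs2]. simpl in Hs1. unfold glue_at. destruct Rle_dec; [lra|]. auto.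
Qed.

End Extension.

(** * Dynamics on M *)

Section Dynamics.

Variables (h : R -> R) (M A : R) (u du ddu E dE : R -> R).
Hypotheses (HA : A < 0) (Hh : forall x, 0 <= h x <= M)
  (Hu : forall s, A < s < 0 -> is_derive u s (du s))
  (Hdu : forall s, A < s < 0 -> is_derive du s (ddu s))
  (HE : forall s, A < s < 0 -> is_derive E s (dE s))
  (Hddu : forall s, A < s <= 0 -> ddu s = E s * u s / 2 - h (u s) * u s ^ 2 * du s)
  (HdE : forall s, A < s <= 0 -> dE s = - 4 * h (u s) * du s ^ 2)
  (HonM : forall s, A < s <= 0 -> 2 * du s ^ 2 - E s * u s ^ 2 = 1)
  (Hunbounded : forall B c, A < c < 0 ->
     ~ forall s, A < s <= c -> Rabs (u s) <= B /\ Rabs (du s) <= B /\ Rabs (E s) <= B).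

Lemma E_antitone (x y : R) : A < x <= y -> y < 0 -> E y <= E x.
Proof.
  intros Hxy Hy.
  destruct (MVT_closed E dE x y) as [c [Hc Ec]]; [lra | intros z Hz; apply HE; lra |].
  assert (dE c <= 0)
    by (rewrite HdE by lra; pose proof (Hh (u c)); pose proof (pow2_ge_0 (du c)); nra).
  nra.
Qed.

Lemma E_nonneg_near_left_end (c : R) : A < c < 0 -> exists s0, A < s0 <= c /\ 0 <= E s0.
Proof.
  intros Hc. apply NNPP. intros Hn.
  assert (Hneg : forall s, A < s <= c -> E s < 0)
    by (intros s Hs; apply Rnot_le_lt; intros Hle; apply Hn; exists s; auto).
  assert (Hdu1 : forall z, A < z <= c -> Rabs (du z) <= 1).
  { intros z Hz. specialize (HonM z ltac:(lra)). specialize (Hneg z Hz).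
    pose proof (pow2_ge_0 (u z)). assert (du z ^ 2 <= 1 / 2) by nra.
    apply Rabs_le_between. split; nra. }
  apply (Hunbounded (Rabs (u c) + (c - A) + 1 + Rabs (E c)) c Hc). intros s Hs.
  pose proof (Rabs_pos (u c)). pose proof (Rabs_pos (E c)). split; [|split].
  - assert (Hus : Rabs (u s - u c) <= 1 * Rabs (s - c)).
    { apply (lipschitz_of_deriv_bound u du A c 1); [|lra | lra].
      intros z Hz. split; [apply Hu; lra | apply Hdu1, Hz]. }
    rewrite (Rabs_minus_sym s c), (Rabs_right (c - s)) in Hus by lra.
    pose proof (Rabs_triang_inv (u s) (u c)). lra.
  - pose proof (Hdu1 s Hs). lra.
  - pose proof (E_antitone s c ltac:(lra) ltac:(lra)).
    pose proof (Hneg s Hs). pose proof (Hneg c ltac:(lra)).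
    rewrite (Rabs_left (E s)), (Rabs_left (E c)) by lra. lra.
Qed.

(* On M, -E' = 4 h u'^2 <= 2 M (1 + E u^2) <= 2 M (1 + C E) while u^2 <= C and E >= 0. *)
Lemma E_bounded_of_u_bounded (s0 C : R) : A < s0 < 0 -> 1 <= C ->
  (forall s, A < s <= s0 -> 0 <= E s /\ u s ^ 2 <= C) ->
  forall s, A < s <= s0 -> 1 + C * E s <= (1 + C * E s0) * exp (2 * M * C * (s0 - A)).
Proof.
  intros Hs0 HC Hbd s Hs.
  assert (HM0 : 0 <= M) by (pose proof (Hh 0); lra).
  assert (Hg := gronwall_left (fun z => 1 + C * E z) (fun z => C * dE z) A s0 (2 * M * C)).
  assert (HEb : 1 + C * E s <= (1 + C * E s0) * exp (2 * M * C * (s0 - s))).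
  { apply Hg; [|exact Hs]. intros z Hz. split; [apply is_derive_affine, HE; lra|].
    rewrite HdE by lra. specialize (HonM z ltac:(lra)). destruct (Hbd z Hz) as [HEz Huz].
    pose proof (Hh (u z)). pose proof (pow2_ge_0 (du z)).
    assert (h (u z) * du z ^ 2 <= M * du z ^ 2) by nra.
    assert (M * (E z * u z ^ 2) <= M * (C * E z)) by (apply Rmult_le_compat_l; nra).
    assert (M * (2 * du z ^ 2) = M * (1 + E z * u z ^ 2)) by (rewrite <- HonM; ring).
    assert (Hdecay : 4 * h (u z) * du z ^ 2 <= 2 * M * (1 + C * E z)) by lra.
    apply Rmult_le_compat_l with (r := C) in Hdecay; lra. }
  assert (exp (2 * M * C * (s0 - s)) <= exp (2 * M * C * (s0 - A)))
    by (apply exp_le_compat, Rmult_le_compat_l; nra).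
  assert (0 <= 1 + C * E s0) by (destruct (Hbd s0 ltac:(lra)); nra).
  nra.
Qed.

Lemma du_u_neg_somewhere (s0 : R) : A < s0 < 0 -> (forall s, A < s <= s0 -> 0 <= E s) ->
  exists t0, A < t0 <= s0 /\ du t0 * u t0 < 0.
Proof.
  intros Hs0 HEpos. apply NNPP. intros Hn.
  assert (Hw : forall s, A < s <= s0 -> 0 <= du s * u s)
    by (intros s Hs; apply Rnot_lt_le; intros Hlt; apply Hn; exists s; auto).
  assert (Hu2 : forall s, A < s <= s0 -> u s * u s <= u s0 * u s0).
  { intros s Hs.
    apply (le_of_deriv_nonneg (fun z => u z * u z) (fun z => du z * u z + u z * du z)); [lra|].
    intros z Hz. split; [apply is_derive_mult_R; apply Hu; lra|].
    pose proof (Hw z ltac:(lra)). lra. }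
  set (C := u s0 * u s0 + 1).
  set (Q := (1 + C * E s0) * exp (2 * M * C * (s0 - A))).
  assert (HEQ : forall s, A < s <= s0 -> 1 + C * E s <= Q).
  { apply E_bounded_of_u_bounded; [exact Hs0 | unfold C; nra |].
    intros s Hs. split; [apply HEpos, Hs | specialize (Hu2 s Hs); unfold C; simpl; lra]. }
  apply (Hunbounded (Rabs (u s0) + Q + 1) s0 Hs0). intros s Hs.
  specialize (HEQ s Hs). specialize (HEpos s Hs). specialize (Hu2 s Hs).
  pose proof (Rabs_pos (u s0)). assert (HC : 1 <= C) by (unfold C; nra).
  split; [|split].
  - assert (Rabs (u s) <= Rabs (u s0)) by (apply Rsqr_le_abs_0; exact Hu2). nra.
  - specialize (HonM s ltac:(lra)).
    assert (E s * u s ^ 2 <= C * E s) by (unfold C; simpl; nra).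
    assert (Rabs (du s) <= 1 + du s ^ 2) by (apply Rabs_le_between; split; nra).
    nra.
  - rewrite Rabs_right by lra. nra.
Qed.

(* At a zero of w = u u', w' = u'^2 + u u'' = u'^2 + E u^2 / 2 = 1/2 + E u^2 on M. *)
Lemma du_u_neg_persists (t0 : R) : A < t0 < 0 -> (forall s, A < s <= t0 -> 0 <= E s) ->
  du t0 * u t0 < 0 -> forall s, A < s <= t0 -> du s * u s < 0.
Proof.
  intros Ht0 HEpos Hw s Hs. apply Rnot_le_lt. intros Hws.
  apply (Rlt_not_le _ _ Hw).
  apply (nonneg_of_deriv_pos_at_zeros (fun z => du z * u z)
    (fun z => ddu z * u z + du z * du z) s t0); [lra | | | exact Hws].
  - intros z Hz. apply is_derive_mult_R; [apply Hdu | apply Hu]; lra.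
  - intros z Hz Hz0. cbv beta in *. rewrite Hddu by lra.
    specialize (HonM z ltac:(lra)). specialize (HEpos z ltac:(lra)).
    replace ((E z * u z / 2 - h (u z) * u z ^ 2 * du z) * u z + du z * du z)
      with (E z * u z ^ 2 / 2 + du z ^ 2 - h (u z) * u z ^ 2 * (du z * u z)) by field.
    rewrite Hz0. pose proof (pow2_ge_0 (u z)). nra.
Qed.

Theorem du_u_neg_near_left_end : exists s1, A < s1 <= 0 /\ forall s, A < s <= s1 -> du s * u s < 0.
Proof.
  destruct (E_nonneg_near_left_end (A / 2) ltac:(lra)) as [s0 [Hs0 HEs0]].
  assert (HEpos : forall s, A < s <= s0 -> 0 <= E s)
    by (intros s Hs; pose proof (E_antitone s s0 ltac:(lra) ltac:(lra)); lra).
  destruct (du_u_neg_somewhere s0 ltac:(lra) HEpos) as [t0 [Ht0 Hw]].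
  exists t0. split; [lra|].
  apply du_u_neg_persists; [lra | intros s Hs; apply HEpos; lra | exact Hw].
Qed.

End Dynamics.

Theorem lemma9p2 (delta : R -> R)
  (Hnonneg : forall r, 0 < r -> 0 <= delta r)
  (Hbdd : exists M, forall r, 0 < r -> Rabs (delta r) <= M)
  (Hder : forall r, 0 < r -> ex_derive delta r)
  (Hcont : forall r, 0 < r -> continuous (Derive delta) r)
  (Hlim : filterlim (fun r => sqrt r * Derive delta r) (at_right 0) (locally 0))
  (A : R) (u du E : R -> R)
  (Hsol : is_solution delta (Finite A) u du E)
  (HM : on_M (Finite A) u du E)
  (Hmax : maximal_left delta (Finite A) u du E) :
  exists s1, A < s1 <= 0 /\ forall s, A < s <= s1 -> du s * u s < 0.
Proof.
  destruct Hbdd as [Mb HMb].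
  destruct (Rlt_or_le A 0) as [HA | HA].
  (* For A >= 0 the interval ]A, 0] is empty and the zero solution on ]-oo, 0] extends (u, E). *)
  2:{ exfalso. apply Hmax. exists m_infty, (fun _ => 0), (fun _ => 0), (fun _ => 0).
      split; [exact I|]. split; [apply zero_is_solution|]. intros s [Hs1 Hs2]. simpl in Hs1. lra. }
  assert (Hh : forall x, 0 <= delta_sq delta x <= Mb) by (apply delta_sq_bounds; assumption).
  destruct (proj1 (is_solution_state _ _ _ _ _) Hsol) as [ddu [dE [Hd Hode]]].
  assert (Hint : forall i s, A < s < 0 -> is_derive (state u du E i) s (state du ddu dE i s))
    by (intros i s Hs; apply (has_deriv_on_left_int_interior A); [apply Hd | exact Hs]).
  apply (du_u_neg_near_left_end (delta_sq delta) Mb A u du ddu E dE HA Hh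
    (Hint 0%nat) (Hint 1%nat) (Hint 2%nat)).
  - intros s Hs. apply (Hode 1%nat s). split; simpl; lra.
  - intros s Hs. apply (Hode 2%nat s). split; simpl; lra.
  - intros s Hs. apply HM. split; simpl; lra.
  - intros B c Hc Hbd. apply Hmax.
    assert (Hbound : forall x, Rabs (delta_sq delta x) <= Mb)
      by (intros x; apply Rabs_le_between; pose proof (Hh x); lra).
    exact (solution_extends_left delta Mb Hbound (delta_sq_lipschitz delta Hder Hcont Hlim)
      A c B u du E Hc Hsol Hbd).
Qed.
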